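(* Let $s\in S^{\mathbb{N}}$ be a directive sequence and $u=(u_k)$ a fixed point of $s$. Let $b_n$ be the first letter of $u_n$, and assume $|s_{[0,n)}(b_n)|\to\infty$ as $n\to\infty$. Then for every $a\in A$, $$W_a(u_0)=\bigcup_{n\in\mathbb{N}}\Big\{\sum_{k=0}^nM_{[0,k)}t_k\ \Big|\ b_{n+1}\xrightarrow{t_n,s_n}\cdots\xrightarrow{t_0,s_0}a \text{ is a path in } \mathcal{A}\Big\}.$$
   Context: $A=\{0,\dots,d\}$; $S$ is a finite set of unimodular substitutions on $A$ (morphisms of $A^*$ sending letters to non-empty words, extended to infinite words). $\mathrm{ab}(w)\in\mathbb{Z}^{d+1}$ counts letters of $w$, $\mathrm{ab}(\sigma)$ is the matrix of $\sigma$. For $s=(s_k)$: $M_k=\mathrm{ab}(s_k)$, $M_{[0,k)}=M_0\cdots M_{k-1}$ ($M_{[0,0)}=\mathrm{Id}$), $s_{[0,n)}=s_0\circ\cdots\circ s_{n-1}$. A fixed point of $s$ is $(u_k)$ with $s_k(u_{k+1})=u_k$ for all $k$. $W_a(w)=\{\mathrm{ab}(p):pa\text{ prefix of }w\}$. Abelianized prefix automaton $\mathcal{A}$: states $A$, transitions $c\xrightarrow{t,\sigma}e$ ($\sigma\in S$) iff $\sigma(c)=peq$ for words $p,q$ with $\mathrm{ab}(p)=t$; a path $c_{n+1}\xrightarrow{t_n,s_n}\cdots\xrightarrow{t_0,s_0}c_0$ means $c_{k+1}\xrightarrow{t_k,s_k}c_k$ are transitions for all $0\le k\le n$. *)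

From mathcomp Require Import all_boot all_order all_algebra.
Set Implicit Arguments. Unset Strict Implicit. Unset Printing Implicit Defensive.
Import GRing.Theory Num.Theory.
Local Open Scope ring_scope.

(* Alphabet A = {0,...,d} is 'I_d.+1. Finite words: seq; infinite words: nat -> letter. *)
Notation letter d := ('I_d.+1).
Definition subst (d : nat) := {ffun letter d -> seq (letter d)}.
Definition infword (d : nat) := nat -> letter d.

Definition ab {d : nat} (w : seq (letter d)) : 'cV[int]_d.+1 :=
  \col_i ((count_mem i w)%:Z).

Definition ab_mx {d : nat} (sg : subst d) : 'M[int]_d.+1 :=
  \matrix_(i, j) ((count_mem i (sg j))%:Z).

Definition nonerasing {d : nat} (sg : subst d) : Prop :=
  forall c, (0 < size (sg c))%N.

Definition unimodular {d : nat} (sg : subst d) : Prop :=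
  `|\det (ab_mx sg)| = 1.

Definition subst_word {d : nat} (sg : subst d) (w : seq (letter d)) : seq (letter d) :=
  flatten (map sg w).

(* image of an infinite word: the n-th letter of sg(w) is the n-th letter of
   sg(w_0 ... w_n) (which has length >= n+1 when sg is non-erasing) *)
Definition subst_inf {d : nat} (sg : subst d) (w : infword d) : infword d :=
  fun n => nth ord0 (subst_word sg (mkseq w n.+1)) n.

Definition Mpref {d : nat} (s : nat -> subst d) (k : nat) : 'M[int]_d.+1 :=
  \prod_(i < k) ab_mx (s i).

(* s_{[0,n)}(w) = s_0 ( s_1 ( ... s_{n-1} (w))) *)
Fixpoint spref {d : nat} (s : nat -> subst d) (n : nat) (w : seq (letter d)) : seq (letter d) :=
  match n with
  | 0 => w
  | n'.+1 => spref s n' (subst_word (s n') w)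
  end.

Definition is_fixed_point {d : nat} (s : nat -> subst d) (u : nat -> infword d) : Prop :=
  forall k i, subst_inf (s k) (u k.+1) i = u k i.

Definition Wa {d : nat} (a : letter d) (w : infword d) (v : 'cV[int]_d.+1) : Prop :=
  exists n, w n = a /\ v = ab (mkseq w n).

(* transition c --(t,sg)--> e of the abelianized prefix automaton (sg in S) *)
Definition transition {d : nat} (S : seq (subst d)) (c : letter d) (t : 'cV[int]_d.+1)
    (sg : subst d) (e : letter d) : Prop :=
  sg \in S /\ exists p q, sg c = p ++ e :: q /\ ab p = t.

Definition path_set {d : nat} (S : seq (subst d)) (s : nat -> subst d) (b : letter d)
    (a : letter d) (n : nat) (v : 'cV[int]_d.+1) : Prop :=
  exists (c : nat -> letter d) (t : nat -> 'cV[int]_d.+1),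
    [/\ c n.+1 = b, c 0%N = a,
        (forall k, (k <= n)%N -> transition S (c k.+1) (t k) (s k) (c k))
      & v = \sum_(k < n.+1) Mpref s k *m t k].

(* Unfolding the fixed point, s_[0,n)(b_n) is a prefix of u_0 for every n, and
   by the growth hypothesis these prefixes exhaust u_0.  An occurrence of a in
   s_[0,n)(b) is located by choosing successively, for k = n-1, ..., 0, the
   letter c_k of s_k(c_{k+1}) whose image contains it; this is a path
   b = c_n -> ... -> c_0 = a of the automaton, and the abelianized prefix
   before the occurrence is sum_k M_[0,k) ab(p_k), p_k being the part of
   s_k(c_{k+1}) before c_k. *)
From mathcomp Require Import all_boot all_order all_algebra.
Set Implicit Arguments. Unset Strict Implicit. Unset Printing Implicit Defensive.
Import GRing.Theory Num.Theory.
Local Open Scope ring_scope.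

Lemma take_mkseq (T : Type) (f : nat -> T) m n :
  take m (mkseq f n) = mkseq f (minn m n).
Proof. by rewrite /mkseq -map_take take_iota. Qed.

Lemma prefix_mkseq (T : eqType) (f : nat -> T) m n :
  (m <= n)%N -> prefix (mkseq f m) (mkseq f n).
Proof. by move=> le_mn; rewrite -(minn_idPl le_mn) -take_mkseq prefix_take. Qed.

Lemma mkseq_eq_cat_cons (T : Type) (f : nat -> T) n P a Q :
  mkseq f n = P ++ a :: Q -> f (size P) = a /\ mkseq f (size P) = P.
Proof.
move=> eq_f; have lt_Pn : (size P < n)%N.
  by rewrite -(size_mkseq f n) eq_f size_cat addnS ltnS leq_addr.
split; first by rewrite -(nth_mkseq a f lt_Pn) eq_f nth_cat ltnn subnn.
by rewrite -(minn_idPl (ltnW lt_Pn)) -take_mkseq eq_f take_size_cat.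
Qed.

Lemma mkseq_split (T : Type) (f : nat -> T) m n :
  (m < n)%N -> exists Q, mkseq f n = mkseq f m ++ f m :: Q.
Proof.
move=> lt_mn; exists (drop m.+1 (mkseq f n)).
have ltm : (m < size (mkseq f n))%N by rewrite size_mkseq.
rewrite -{1}(cat_take_drop m (mkseq f n)) (drop_nth (f m) ltm) nth_mkseq //.
by rewrite take_mkseq (minn_idPl (ltnW lt_mn)).
Qed.

Lemma flatten_map_eq_cat_cons (T U : eqType) (f : T -> seq U) w P a Q :
  flatten (map f w) = P ++ a :: Q ->
  exists p x q P' Q',
    [/\ w = p ++ x :: q, f x = P' ++ a :: Q' & P = flatten (map f p) ++ P'].
Proof.
elim: w P => [|y w IHw] P /=; first by case: P.
move=> eq_yw; case: (ltnP (size P) (size (f y))) => [lt_P | le_P].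
- have sz : size (take (size P) (f y)) = size P by rewrite size_takel // ltnW.
  have eq_fy := cat_take_drop (size P) (f y); rewrite (drop_nth a lt_P) in eq_fy.
  move/eqP: eq_yw; rewrite -{1}eq_fy -catA eqseq_cat //.
  case/andP=> /eqP eq_take /eqP[eq_nth _].
  exists [::], y, w, P, (drop (size P).+1 (f y)).
  by split=> //; rewrite -{1}eq_fy eq_take eq_nth.
- rewrite -(cat_take_drop (size (f y)) P) -catA in eq_yw.
  have sz : size (f y) = size (take (size (f y)) P) by rewrite size_takel.
  move/eqP: eq_yw; rewrite eqseq_cat // => /andP[/eqP eq_y /eqP /IHw].
  case=> p [x [q [P' [Q' [-> eq_x eq_P]]]]].
  exists (y :: p), x, q, P', Q'; split => //.
  by rewrite /= -catA -eq_P {1}eq_y cat_take_drop.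
Qed.

Section Substitutions.
Variable d : nat.
Implicit Types (w p q : seq (letter d)) (sg : subst d).

Lemma ab_nil : ab (@nil (letter d)) = 0.
Proof. by apply/matrixP => i j; rewrite !mxE. Qed.

Lemma ab_cat p q : ab (p ++ q) = ab p + ab q.
Proof. by apply/matrixP => i j; rewrite !mxE count_cat PoszD. Qed.

Lemma ab_seq1 (x : letter d) : ab [:: x] = delta_mx x 0.
Proof.
by apply/matrixP => i j; rewrite !mxE ord1 eqxx andbT eq_sym /= addn0; case: (x == i).
Qed.

Lemma subst_word_cat sg p q :
  subst_word sg (p ++ q) = subst_word sg p ++ subst_word sg q.
Proof. by rewrite /subst_word map_cat flatten_cat. Qed.

Lemma subst_word_seq1 sg x : subst_word sg [:: x] = sg x.
Proof. exact: cats0. Qed.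

Lemma ab_subst_word sg w : ab (subst_word sg w) = ab_mx sg *m ab w.
Proof.
elim: w => [|x w IHw]; first by rewrite ab_nil mulmx0.
rewrite -cat1s subst_word_cat subst_word_seq1 !ab_cat IHw mulmxDr ab_seq1 -colE.
by congr (_ + _); apply/matrixP => i j; rewrite !mxE.
Qed.

Lemma size_subst_word sg w : nonerasing sg -> (size w <= size (subst_word sg w))%N.
Proof.
move=> ne_sg; elim: w => [|x w IHw] //.
by rewrite -cat1s subst_word_cat subst_word_seq1 !size_cat; apply: leq_add.
Qed.

Lemma nth_subst_word_prefix sg p q i :
  prefix p q -> (i < size (subst_word sg p))%N ->
  nth ord0 (subst_word sg p) i = nth ord0 (subst_word sg q) i.
Proof. by case/prefixP=> r -> lt_i; rewrite subst_word_cat nth_cat lt_i. Qed.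

Variable s : nat -> subst d.

Lemma spref_cat n p q : spref s n (p ++ q) = spref s n p ++ spref s n q.
Proof. by elim: n p q => [|n IHn] p q //=; rewrite subst_word_cat IHn. Qed.

Lemma spref_flatten n w : spref s n w = flatten (map (fun x => spref s n [:: x]) w).
Proof.
elim: w => [|x w IHw]; first by elim: n.
by rewrite -cat1s spref_cat IHw.
Qed.

Lemma MprefS n : Mpref s n.+1 = Mpref s n *m ab_mx (s n).
Proof. by rewrite /Mpref big_ord_recr. Qed.

Lemma ab_spref n w : ab (spref s n w) = Mpref s n *m ab w.
Proof.
elim: n w => [|n IHn] w /=; first by rewrite /Mpref big_ord0 mul1mx.
by rewrite IHn ab_subst_word mulmxA MprefS.
Qed.

End Substitutions.

Section FixedPointPrefixes.
Variables (d : nat) (s : nat -> subst d) (u : nat -> infword d).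
Hypothesis ne_s : forall k, nonerasing (s k).
Hypothesis fixed_u : is_fixed_point s u.

Lemma subst_word_mkseq (sg : subst d) (w : infword d) n :
  nonerasing sg ->
  subst_word sg (mkseq w n) = mkseq (subst_inf sg w) (size (subst_word sg (mkseq w n))).
Proof.
move=> ne_sg; apply: (@eq_from_nth _ ord0); rewrite ?size_mkseq // => i lt_i.
rewrite nth_mkseq // /subst_inf.
have lt_i' : (i < size (subst_word sg (mkseq w i.+1)))%N.
  by apply: leq_trans (size_subst_word _ ne_sg); rewrite size_mkseq.
rewrite (nth_subst_word_prefix (prefix_mkseq w (leq_maxl n i.+1)) lt_i).
by rewrite (nth_subst_word_prefix (prefix_mkseq w (leq_maxr n i.+1)) lt_i').
Qed.

Lemma spref_mkseq_fixed_point n m :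
  spref s n (mkseq (u n) m) = mkseq (u 0%N) (size (spref s n (mkseq (u n) m))).
Proof.
elim: n m => [|n IHn] m /=; first by rewrite size_mkseq.
by rewrite subst_word_mkseq // (eq_mkseq (fixed_u n)); apply: IHn.
Qed.

End FixedPointPrefixes.

Section PrefixAutomaton.
Variables (d : nat) (S : seq (subst d)) (s : nat -> subst d).

Lemma path_occurrence (c : nat -> letter d) (t : nat -> 'cV[int]_d.+1) m :
  (forall k, (k < m)%N -> transition S (c k.+1) (t k) (s k) (c k)) ->
  exists P Q, spref s m [:: c m] = P ++ c 0%N :: Q /\
              ab P = \sum_(k < m) Mpref s k *m t k.
Proof.
elim: m => [|m IHm] path_c; first by exists [::], [::]; rewrite big_ord0 ab_nil.
have [|P [Q [eq_P ab_P]]] := IHm; first by move=> k /ltnW; apply: path_c.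
have [_ [p [q [eq_cm ab_p]]]] := path_c m (ltnSn m).
exists (spref s m p ++ P), (Q ++ spref s m q); split.
  by rewrite /= subst_word_seq1 eq_cm -cat1s !spref_cat eq_P -!catA.
by rewrite ab_cat big_ord_recr /= ab_P ab_spref ab_p addrC.
Qed.

Hypothesis s_in_S : forall k, s k \in S.

Lemma occurrence_path m (b a : letter d) P Q :
  spref s m [:: b] = P ++ a :: Q ->
  exists (c : nat -> letter d) (t : nat -> 'cV[int]_d.+1),
    [/\ c m = b, c 0%N = a,
        forall k, (k < m)%N -> transition S (c k.+1) (t k) (s k) (c k)
      & ab P = \sum_(k < m) Mpref s k *m t k].
Proof.
elim: m b P Q => [|m IHm] b P Q /=.
  case: P => [[-> _]|? [|]] //.
  by exists (fun=> a), (fun=> 0); split; rewrite ?big_ord0 ?ab_nil.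
rewrite subst_word_seq1 spref_flatten => /flatten_map_eq_cat_cons.
case=> p [x [q [P' [Q' [eq_b /IHm [c [t [cm c0 path_c ab_P']] ->]]]]]].
exists (fun k => if k == m.+1 then b else c k),
       (fun k => if k == m then ab p else t k); split => //.
- by rewrite eqxx.
- move=> k; rewrite ltnS leq_eqVlt => /orP[/eqP -> | lt_km].
    rewrite eqxx (ltn_eqF (ltnSn m)) cm; split=> //.
    by exists p, q; rewrite eqxx.
  by rewrite eqSS (ltn_eqF lt_km) (ltn_eqF (leqW lt_km)); apply: path_c.
- rewrite ab_cat -spref_flatten ab_spref ab_P' big_ord_recr /= eqxx addrC.
  by congr (_ + _); apply: eq_bigr => k _; rewrite ltn_eqF.
Qed.

Lemma path_setP (b a : letter d) n v :
  path_set S s b a n v <-> exists P Q, spref s n.+1 [:: b] = P ++ a :: Q /\ v = ab P.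
Proof.
split.
  case=> c [t [<- <- path_c ->]].
  have [P [Q [eq_P ab_P]]] := @path_occurrence c t n.+1 path_c.
  by exists P, Q.
case=> P [Q [/occurrence_path [c [t [cn c0 path_c ab_P]]] ->]].
by exists c, t; split.
Qed.

End PrefixAutomaton.

Theorem lemma3p22 (d : nat) (S : seq (subst d))
    (HS : forall sg, sg \in S -> nonerasing sg /\ unimodular sg)
    (s : nat -> subst d) (Hs : forall k, s k \in S)
    (u : nat -> infword d) (Hu : is_fixed_point s u)
    (Hgrow : forall B : nat, exists N : nat, forall n : nat, (N <= n)%N ->
               (B <= size (spref s n [:: u n 0%N]))%N) :
  forall (a : letter d) (v : 'cV[int]_d.+1),
    Wa a (u 0%N) v <-> exists n : nat, path_set S s (u n.+1 0%N) a n v.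
Proof.
have ne_s k : nonerasing (s k) by case: (HS _ (Hs k)).
have prefix_u0 n : spref s n [:: u n 0%N] =
    mkseq (u 0%N) (size (spref s n [:: u n 0%N])).
  exact: spref_mkseq_fixed_point ne_s Hu n 1.
move=> a v; split.
  case=> m [um ->]; have [N grow_N] := Hgrow m.+1.
  exists N; apply/(path_setP Hs).
  have [Q eq_Q] := mkseq_split (u 0%N) (grow_N N.+1 (leqnSn N)).
  by exists (mkseq (u 0%N) m), Q; rewrite -um -eq_Q -prefix_u0.
case=> n /(path_setP Hs) [P [Q [eq_P ->]]].
have [u0_P eq_mk] := mkseq_eq_cat_cons (etrans (esym (prefix_u0 n.+1)) eq_P).
by exists (size P); rewrite eq_mk.
Qed.
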